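(* Consider a zero-one knapsack instance with $n$ items, integer capacity $W>0$, positive integer weights $w_i$ and integer profits $v_i$, and let $\mathcal{S}^*$ be its set of optimal solutions. Suppose the tables $V(i,w)$, $C(i,w)$ are given, defined by: $V(0,w)=0$, $C(0,w)=1$ for $0\le w\le W$; $V(i,w)=-\infty$, $C(i,w)=0$ for $w<0$; and for $1\le i\le n$, $0\le w\le W$, $V(i,w)=\max\{V(i-1,w),V(i-1,w-w_i)+v_i\}$ and $C(i,w)=C(i-1,w)+C(i-1,w-w_i)$ if $V(i-1,w)=V(i-1,w-w_i)+v_i$, $C(i,w)=C(i-1,w)$ if $V(i-1,w)>V(i-1,w-w_i)+v_i$, and $C(i,w)=C(i-1,w-w_i)$ otherwise. Consider the algorithm that, given a positive integer $k$, repeats the following procedure $k$ times independently and returns the collection of the $k$ outputs: start with $L=\emptyset$, $i=n$, $w=W$; while $i>0$ and $w>0$: if $w_i\le w$ and $V(i,w)=V(i-1,w)=V(i-1,w-w_i)+v_i$, then with probability $C(i-1,w-w_i)/C(i,w)$ add $i$ to $L$ and set $w\leftarrow w-w_i$; else if $V(i,w)>V(i-1,w)$, add $i$ to $L$ and set $w\leftarrow w-w_i$; then set $i\leftarrow i-1$; output $L$. This algorithm produces $k$ samples, each distributed uniformly at random on $\mathcal{S}^*$, in time $O(kn)$.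
   Context: For $s\subseteq[n]=\{1,\dots,n\}$ let $w(s)=\sum_{i\in s}w_i$ and $v(s)=\sum_{i\in s}v_i$. The set of feasible solutions is $\mathcal{S}=\{s\subseteq[n]: w(s)\le W\}$, $v_{\max}=\max_{s\in\mathcal{S}}v(s)$, and $\mathcal{S}^*=\{s\in\mathcal{S}: v(s)=v_{\max}\}$. Running time counts each table lookup, comparison, arithmetic operation and random draw as a constant-time operation. *)

From mathcomp Require Import all_boot all_order all_algebra.
Set Implicit Arguments. Unset Strict Implicit. Unset Printing Implicit Defensive.
Import Order.TTheory GRing.Theory Num.Theory.
Local Open Scope ring_scope.

(* An element of [dist A] is a finite list of execution paths, each recorded
   as (probability, number of constant-time operations, result). *)
Definition dist (A : Type) := seq (rat * nat * A).

Definition dret {A} (x : A) : dist A := [:: (1, 0%N, x)].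

Definition dbind {A B} (d : dist A) (f : A -> dist B) : dist B :=
  flatten [seq [seq (p.1.1 * q.1.1, (p.1.2 + q.1.2)%N, q.2) | q <- f p.2] | p <- d].

Definition tick {A} (c : nat) (d : dist A) : dist A :=
  [seq (p.1.1, (p.1.2 + c)%N, p.2) | p <- d].

Definition flip (p : rat) : dist bool := [:: (p, 1%N, true); (1 - p, 1%N, false)].

Definition prob {A : eqType} (d : dist A) (x : A) : rat :=
  \sum_(p <- d | p.2 == x) p.1.1.

(* ---------- extended integers Z u {-oo}: None = -oo ---------- *)
Definition oadd (a : option int) (b : int) : option int := omap (fun x => x + b) a.
Definition olt (a b : option int) : bool :=
  match a, b with
  | None, Some _ => true
  | Some x, Some y => x < y
  | _, _ => false
  end.
Definition omax (a b : option int) : option int := if olt a b then b else a.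

Section Knapsack.
Variables (n : nat) (W : nat) (w : 'I_n -> nat) (v : 'I_n -> int).

(* the paper's items are 1..n; item i is the ordinal i-1 *)
Definition item (i : nat) : option 'I_n := insub i.-1.
Definition wt (i : nat) : nat := oapp w 0%N (item i).
Definition vt (i : nat) : int := oapp v 0 (item i).

Definition weight (s : {set 'I_n}) : nat := (\sum_(i in s) w i)%N.
Definition value (s : {set 'I_n}) : int := \sum_(i in s) v i.
Definition feasible (s : {set 'I_n}) : bool := (weight s <= W)%N.
Definition Sstar : {set {set 'I_n}} :=
  [set s | feasible s & [forall t, feasible t ==> (value t <= value s)]].

Fixpoint Vtab (i : nat) (x : int) : option int :=
  if x < 0 then None else
  match i with
  | 0%N => Some 0
  | i'.+1 => omax (Vtab i' x) (oadd (Vtab i' (x - (wt i'.+1)%:Z)) (vt i'.+1))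
  end.

Fixpoint Ctab (i : nat) (x : int) : nat :=
  if x < 0 then 0%N else
  match i with
  | 0%N => 1%N
  | i'.+1 =>
      let a := Vtab i' x in
      let b := oadd (Vtab i' (x - (wt i'.+1)%:Z)) (vt i'.+1) in
      if a == b then (Ctab i' x + Ctab i' (x - (wt i'.+1)%:Z))%N
      else if olt b a then Ctab i' x
      else Ctab i' (x - (wt i'.+1)%:Z)
  end.

(* The while loop, with current index i, remaining capacity x and set L.
   Each iteration charges the lookups / comparisons / arithmetic it performs. *)
Fixpoint sloop (i : nat) (x : int) (L : {set 'I_n}) : dist {set 'I_n} :=
  match i with
  | 0%N => tick 1 (dret L)                         (* test i > 0 *)
  | i'.+1 =>
    if ~~ (0 < x) then tick 2 (dret L)              (* tests i > 0, w > 0 *)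
    else
      let wi := (wt i)%:Z in
      let addi := if item i is Some j then j |: L else L in
      if [&& wi <= x, Vtab i x == Vtab i' x & Vtab i' x == oadd (Vtab i' (x - wi)) (vt i)]
      then
        (* 2 loop tests, ~9 ops for the test, 4 ops for the ratio, 3 updates *)
        tick 18 (dbind (flip ((Ctab i' (x - wi))%:R / (Ctab i x)%:R))
                  (fun b => if b then sloop i' (x - wi) addi else sloop i' x L))
      else if olt (Vtab i' x) (Vtab i x)
      then tick 17 (sloop i' (x - wi) addi)
      else tick 15 (sloop i' x L)
  end.

(* one run of the procedure (3 operations for the initialisation) *)
Definition sample1 : dist {set 'I_n} := tick 3 (sloop n W%:Z set0).

Fixpoint samples (k : nat) : dist (seq {set 'I_n}) :=
  match k with
  | 0%N => dret [::]
  | k'.+1 => dbind sample1 (fun s => dbind (samples k') (fun ss => dret (s :: ss)))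
  end.

End Knapsack.

(* V(i, x) is the best value of a subset of the first i items of weight at most x
   and C(i, x) is the number of subsets attaining it.  From the state (i, x, L)
   the loop outputs L \cup s, for each optimal subset s of the first i items at
   capacity x, with probability exactly 1/C(i, x): on a tie the coin sends the
   fraction C(i-1, x-w_i)/C(i, x) of the mass to the sets containing item i, each
   of which then gets 1/C(i-1, x-w_i) by induction, and symmetrically for the sets
   avoiding it.  Positive weights make the empty set the only optimal choice at
   capacity 0, which justifies stopping there.  Independent runs multiply, and
   one iteration of the loop costs at most 19 operations. *)

From mathcomp Require Import all_boot all_order all_algebra.
From mathcomp Require Import zify ring.
Set Implicit Arguments. Unset Strict Implicit. Unset Printing Implicit Defensive.
Import Order.TTheory GRing.Theory Num.Theory.
Local Open Scope ring_scope.

Arguments tick : simpl never.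
Arguments dret : simpl never.
Arguments dbind : simpl never.
Arguments flip : simpl never.
Arguments Vtab : simpl never.
Arguments Ctab : simpl never.

Lemma probE (A : eqType) (d : dist A) x :
  prob d x = \sum_(q <- d) q.1.1 * (q.2 == x)%:R.
Proof.
by rewrite /prob big_mkcond; apply: eq_bigr => q _; case: eqP; rewrite ?mulr1 ?mulr0.
Qed.

Lemma prob_tick (A : eqType) c (d : dist A) x : prob (tick c d) x = prob d x.
Proof. by rewrite /prob /tick big_map. Qed.

Lemma prob_ret (A : eqType) (y x : A) : prob (dret y) x = (y == x)%:R.
Proof. by rewrite probE /dret big_seq1 mul1r. Qed.

Lemma prob_bind (A B : eqType) (d : dist A) (f : A -> dist B) x :
  prob (dbind d f) x = \sum_(p <- d) p.1.1 * prob (f p.2) x.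
Proof.
rewrite /prob /dbind big_flatten big_map; apply: eq_bigr => p _.
by rewrite big_map big_distrr.
Qed.

Lemma prob_flip (B : eqType) p (f : bool -> dist B) x :
  prob (dbind (flip p) f) x = p * prob (f true) x + (1 - p) * prob (f false) x.
Proof. by rewrite prob_bind /flip big_cons big_seq1. Qed.

Lemma prob_cons_indep (A : eqType) (d : dist A) (e : dist (seq A)) s ss :
  prob (dbind d (fun s => dbind e (fun ss => dret (s :: ss)))) (s :: ss) =
  prob d s * prob e ss.
Proof.
rewrite prob_bind [prob d s]probE mulr_suml; apply eq_bigr => p _ /=.
rewrite prob_bind probE !mulr_sumr; apply eq_bigr => q _ /=.
rewrite prob_ret eqseq_cons.
by case: (p.2 == s); case: (q.2 == ss); rewrite /= ?mulr0 ?mulr1 ?mul0r.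
Qed.

Lemma prob_cons_nil (A : eqType) (d : dist A) (e : dist (seq A)) :
  prob (dbind d (fun s => dbind e (fun ss => dret (s :: ss)))) [::] = 0.
Proof.
rewrite prob_bind big1 // => p _; rewrite prob_bind big1 ?mulr0 // => q _.
by rewrite prob_ret mulr0.
Qed.

Lemma mem_tick (A : eqType) c (d : dist A) p : p \in tick c d ->
  exists2 q, q \in d & p = (q.1.1, (q.1.2 + c)%N, q.2).
Proof. by move/mapP. Qed.

Lemma mem_bind (A B : eqType) (d : dist A) (f : A -> dist B) p : p \in dbind d f ->
  exists2 q, q \in d & exists2 r, r \in f q.2 & p = (q.1.1 * r.1.1, (q.1.2 + r.1.2)%N, r.2).
Proof.
by move=> /flattenP [_ /mapP [q qd ->]] /mapP [r rf ->]; exists q => //; exists r.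
Qed.

Lemma mem_ret (A : eqType) (y : A) p : p \in dret y -> p = (1, 0%N, y).
Proof. by rewrite inE => /eqP. Qed.

Definition ole (a b : option int) := ~~ olt b a.

Lemma olt_asym a b : olt a b -> ~~ olt b a.
Proof. by case: a b => [a|] [b|] //=; lia. Qed.

Lemma olt_irr a : ~~ olt a a.
Proof. by case: a => [a|] //=; rewrite ltxx. Qed.

Lemma olt_total a b : a != b -> ~~ olt b a -> olt a b.
Proof. by case: a b => [a|] [b|] //=; rewrite ?eqxx // (inj_eq Some_inj); lia. Qed.

Lemma ole_trans a b c : ole a b -> ole b c -> ole a c.
Proof. by rewrite /ole; case: a b c => [a|] [b|] [c|] //=; lia. Qed.

Lemma ole_anti a b : ole a b -> ole b a -> a = b.
Proof. by rewrite /ole; case: a b => [a|] [b|] //= ? ?; congr Some; lia. Qed.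

Lemma ole_oadd a b d : ole a b -> ole (oadd a d) (oadd b d).
Proof. by rewrite /ole; case: a b => [a|] [b|] //=; lia. Qed.

Lemma ole_maxl a b : ole a (omax a b).
Proof. by rewrite /ole /omax; case: ifP => [/olt_asym|_] //; apply: olt_irr. Qed.

Lemma ole_maxr a b : ole b (omax a b).
Proof. by rewrite /ole /omax; case: ifP => [_|/negbT] //; apply: olt_irr. Qed.

Lemma oadd_inj d : injective (oadd ^~ d).
Proof. by case=> [a|] [b|] //= [] /addIr ->. Qed.

Lemma oadd_Some a d m : oadd a d = Some m -> exists2 m', a = Some m' & m = m' + d.
Proof. by case: a => [a|] //= [<-]; exists a. Qed.

Lemma olt_omax a b : olt a (omax a b) = olt a b.
Proof. by rewrite /omax; case: ifP => // _; apply/negbTE/olt_irr. Qed.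

Lemma omax_eql a b : (omax a b == a) = ole b a.
Proof.
rewrite /ole /omax; case: ifP => [ab|/negbT ab]; last by rewrite eqxx.
by apply/negbTE; apply: contraTneq ab => ->; apply: olt_irr.
Qed.

Lemma omax_eqr a b : (omax a b == b) = ole a b.
Proof.
rewrite /ole /omax; case: ifP => [/olt_asym -> //|/negbT ab]; first by rewrite eqxx.
by apply/eqP/idP => [<-|ba]; [apply: olt_irr | exact: ole_anti].
Qed.

Lemma sloop_cost n (w : 'I_n -> nat) v i x L p :
  p \in sloop w v i x L -> (p.1.2 <= 19 * i + 2)%N.
Proof.
elim: i x L p => [|i IH] x L p /=; first by move=> /mem_tick [q /mem_ret -> ->].
case: ifP => _; first by move=> /mem_tick [q /mem_ret -> ->] /=; lia.
case: ifP => _.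
  move=> /mem_tick [q /mem_bind [b + [r + ->]] ->].
  by rewrite !inE => /orP [] /eqP -> /IH /=; lia.
by case: ifP => _ /mem_tick [[[? c] ?] /IH /= + ->] /=; lia.
Qed.

Lemma samples_cost n W (w : 'I_n -> nat) v k p :
  p \in samples W w v k -> (p.1.2 <= k * (19 * n + 5))%N.
Proof.
elim: k p => [|k IH] p /=; first by move/mem_ret ->.
move=> /mem_bind [q /mem_tick [q' /sloop_cost q'_cost ->]].
move=> [r /mem_bind [r' /IH r'_cost [r'' /mem_ret -> ->]] ->].
by move: q'_cost r'_cost => /=; lia.
Qed.

Lemma prob_samples n W (w : 'I_n -> nat) v k ss :
  prob (samples W w v k) ss =
  if size ss == k then \prod_(s <- ss) prob (sample1 W w v) s else 0.
Proof.
elim: k ss => [|k IH] [|s ss] /=; rewrite ?prob_ret ?big_nil //.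
  exact: prob_cons_nil.
by rewrite prob_cons_indep IH eqSS big_cons; case: ifP; rewrite ?mulr0.
Qed.

Lemma item_ord n (j : 'I_n) : item n j.+1 = Some j.
Proof. by rewrite /item /= valK. Qed.

Lemma ord_ind n (P : nat -> Prop) :
  P 0%N -> (forall j : 'I_n, P j -> P j.+1) -> forall i, (i <= n)%N -> P i.
Proof.
by move=> P0 PS; elim=> [|i IH] // le_in; exact: (PS (Ordinal le_in) (IH (ltnW le_in))).
Qed.

Lemma mix_uniform (F : numFieldType) (A B : nat) (c1 c2 : bool) :
  (0 < A)%N -> (0 < B)%N -> ~~ (c1 && c2) ->
  B%:R / (A + B)%:R * (c1%:R / B%:R) + (1 - B%:R / (A + B)%:R) * (c2%:R / A%:R)
    = (c1 || c2)%:R / (A + B)%:R :> F.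
Proof.
move=> A_gt0 B_gt0 c12; have AB_gt0 : (0 < A + B)%N by rewrite addn_gt0 A_gt0.
rewrite natrD in AB_gt0 *.
by case: c1 c2 c12 => [] [] //= _; field;
  rewrite -?natrD ?pnatr_eq0 -?lt0n ?A_gt0 ?B_gt0 ?addn_gt0 ?A_gt0.
Qed.

Section Knapsack.
Variables (n : nat) (w : 'I_n -> nat) (v : 'I_n -> int).
Implicit Types (x : int) (s t L r : {set 'I_n}).
Local Notation V := (Vtab w v).
Local Notation C := (Ctab w v).

Lemma Vtab_neg i x : x < 0 -> V i x = None.
Proof. by case: i => [|i] x_lt0; rewrite /Vtab x_lt0. Qed.

Lemma Vtab0 x : 0 <= x -> V 0 x = Some 0.
Proof. by move=> x_ge0; rewrite /Vtab ltNge x_ge0. Qed.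

Lemma VtabS (j : 'I_n) x : 0 <= x ->
  V j.+1 x = omax (V j x) (oadd (V j (x - (w j)%:Z)) (v j)).
Proof. by move=> x_ge0; rewrite {1}/Vtab ltNge x_ge0 /= /wt /vt item_ord. Qed.

Lemma Ctab_neg i x : x < 0 -> C i x = 0%N.
Proof. by case: i => [|i] x_lt0; rewrite /Ctab x_lt0. Qed.

Lemma Ctab0 x : 0 <= x -> C 0 x = 1%N.
Proof. by move=> x_ge0; rewrite /Ctab ltNge x_ge0. Qed.

Lemma CtabS (j : 'I_n) x : 0 <= x ->
  C j.+1 x = ((V j.+1 x == V j x) * C j x +
              (V j.+1 x == oadd (V j (x - (w j)%:Z)) (v j)) * C j (x - (w j)%:Z))%N.
Proof.
move=> x_ge0; rewrite VtabS // omax_eql omax_eqr /ole.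
set a := V j x; set b := oadd _ _.
have -> : C j.+1 x = if a == b then (C j x + C j (x - (w j)%:Z))%N
                     else if olt b a then C j x else C j (x - (w j)%:Z).
  by rewrite {1}/Ctab ltNge x_ge0 /= /wt /vt item_ord.
have [<-|ab] := eqVneq a b; first by rewrite olt_irr !mul1n.
case: ifP => [/olt_asym -> | /negbT ba]; first by rewrite /= mul1n mul0n addn0.
by rewrite (olt_total ab ba) /= mul0n mul1n.
Qed.

Definition prefix i := [set j : 'I_n | (j < i)%N].
Definition solutions i x :=
  [set s : {set 'I_n} | (s \subset prefix i) && ((weight w s)%:Z <= x)].
Definition optimal i x := [set s in solutions i x | V i x == Some (value v s)].

Lemma weight_D1 (j : 'I_n) s : j \in s -> weight w s = (w j + weight w (s :\ j))%N.
Proof. by move=> js; rewrite /weight (big_setD1 j). Qed.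

Lemma value_D1 (j : 'I_n) s : j \in s -> value v s = v j + value v (s :\ j).
Proof. by move=> js; rewrite /value (big_setD1 j). Qed.

Lemma set0_solutions i x : 0 <= x -> set0 \in solutions i x.
Proof. by move=> x_ge0; rewrite inE sub0set /weight big_set0. Qed.

Lemma solutions_cap_ge0 i x s : s \in solutions i x -> 0 <= x.
Proof. by rewrite inE => /andP [_]; apply: le_trans. Qed.

Lemma solutions0 x s : s \in solutions 0 x -> s = set0.
Proof.
rewrite inE => /andP [/subsetP s_sub _]; apply/setP => k; rewrite inE.
by apply/negP => /s_sub; rewrite inE.
Qed.

Lemma notin_solutions (j : 'I_n) x s : s \in solutions j x -> j \notin s.
Proof.
by rewrite inE => /andP [/subsetP s_sub _]; apply/negP => /s_sub; rewrite inE ltnn.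
Qed.

Lemma prefixS (j : 'I_n) : prefix j.+1 = j |: prefix j.
Proof. by apply/setP => k; rewrite !inE ltnS leq_eqVlt -val_eqE. Qed.

Lemma solutionsS_notin (j : 'I_n) x s : j \notin s ->
  (s \in solutions j.+1 x) = (s \in solutions j x).
Proof.
move=> js; rewrite !inE prefixS -subDset.
suff -> : s :\ j = s by [].
by apply/setDidPl; rewrite disjoint_sym disjoints1.
Qed.

Lemma solutionsS_in (j : 'I_n) x s : j \in s ->
  (s \in solutions j.+1 x) = (s :\ j \in solutions j (x - (w j)%:Z)).
Proof.
by move=> js; rewrite !inE prefixS -subDset (weight_D1 js) PoszD lerBrDl addrC.
Qed.

Lemma Vtab_leS (j : 'I_n) x : 0 <= x -> ole (V j x) (V j.+1 x).
Proof. by move=> x_ge0; rewrite VtabS //; apply: ole_maxl. Qed.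

Lemma Vtab_take_leS (j : 'I_n) x : 0 <= x ->
  ole (oadd (V j (x - (w j)%:Z)) (v j)) (V j.+1 x).
Proof. by move=> x_ge0; rewrite VtabS //; apply: ole_maxr. Qed.

Lemma value_le_Vtab i x s :
  (i <= n)%N -> s \in solutions i x -> ole (Some (value v s)) (V i x).
Proof.
move=> le_in; move: i le_in x s; apply: ord_ind => [|j IH] x s s_sol.
  rewrite (solutions0 s_sol) Vtab0 ?(solutions_cap_ge0 s_sol) // /value big_set0.
  exact: olt_irr.
have x_ge0 := solutions_cap_ge0 s_sol.
have [js|js] := boolP (j \in s).
  move: s_sol; rewrite (solutionsS_in _ js) (value_D1 js) [v j + _]addrC.
  by move=> /IH /(ole_oadd (v j)) /ole_trans; apply; apply: Vtab_take_leS.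
by move: s_sol; rewrite (solutionsS_notin _ js) => /IH /ole_trans; apply; apply: Vtab_leS.
Qed.

Lemma Vtab_attained i x m : (i <= n)%N -> V i x = Some m ->
  exists2 s, s \in solutions i x & value v s = m.
Proof.
move=> le_in; move: i le_in x m; apply: ord_ind => [|j IH] x m.
  have [x_lt0|x_ge0] := ltrP x 0; first by rewrite Vtab_neg.
  rewrite Vtab0 // => -[<-]; exists set0; first exact: set0_solutions.
  by rewrite /value big_set0.
have [x_lt0|x_ge0] := ltrP x 0; first by rewrite Vtab_neg.
rewrite VtabS // /omax; case: ifP => _; last first.
  move=> /IH [s s_sol <-]; exists s => //.
  by rewrite solutionsS_notin // (notin_solutions s_sol).
move=> /oadd_Some [m' /IH [s s_sol <-] ->]; have js := notin_solutions s_sol.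
exists (j |: s); first by rewrite (solutionsS_in _ (setU11 _ _)) setU1K.
by rewrite (value_D1 (setU11 _ _)) setU1K // addrC.
Qed.

Lemma Vtab_Some i x : (i <= n)%N -> 0 <= x -> exists m, V i x = Some m.
Proof.
move=> le_in /(set0_solutions i) /(value_le_Vtab le_in).
by case: (V i x) => [m|] // _; exists m.
Qed.

Lemma optimalE i x s :
  (s \in optimal i x) = (s \in solutions i x) && (V i x == Some (value v s)).
Proof. by rewrite inE. Qed.

Lemma optimal_solutions i x s : s \in optimal i x -> s \in solutions i x.
Proof. by rewrite optimalE => /andP []. Qed.

Lemma optimal_neg i x : x < 0 -> optimal i x = set0.
Proof.
move=> x_lt0; apply/setP => s; rewrite optimalE in_set0.
by apply: contraTF x_lt0 => /andP [/solutions_cap_ge0]; rewrite leNgt.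
Qed.

Lemma optimal0 x : 0 <= x -> optimal 0 x = [set set0].
Proof.
move=> x_ge0; apply/setP => s; rewrite optimalE in_set1 Vtab0 //.
apply/andP/eqP => [[/solutions0 ->]|->] //.
by rewrite set0_solutions // /value big_set0.
Qed.

Lemma optimalS_notin (j : 'I_n) x s : 0 <= x -> j \notin s ->
  (s \in optimal j.+1 x) = (s \in optimal j x) && (V j.+1 x == V j x).
Proof.
move=> x_ge0 js; rewrite !optimalE solutionsS_notin //.
apply/andP/andP => [[s_sol /eqP Vs]|[/andP [s_sol /eqP <-] /eqP //]].
have Vjs : V j x = Some (value v s).
  apply: ole_anti; first by rewrite -Vs; apply: Vtab_leS.
  exact: value_le_Vtab (ltnW (ltn_ord j)) s_sol.
by split; rewrite ?Vs Vjs ?eqxx ?andbT.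
Qed.

Lemma optimalS_in (j : 'I_n) x s : 0 <= x -> j \in s ->
  (s \in optimal j.+1 x) = (s :\ j \in optimal j (x - (w j)%:Z)) &&
                           (V j.+1 x == oadd (V j (x - (w j)%:Z)) (v j)).
Proof.
move=> x_ge0 js; rewrite !optimalE (solutionsS_in _ js) (value_D1 js) [v j + _]addrC.
apply/andP/andP => [[s_sol /eqP Vs]|[/andP [s_sol /eqP Vs] /eqP ->]]; last by rewrite Vs.
have Vtake : oadd (V j (x - (w j)%:Z)) (v j) = oadd (Some (value v (s :\ j))) (v j).
  apply: ole_anti; first by rewrite /= -Vs; apply: Vtab_take_leS.
  exact/ole_oadd/(value_le_Vtab (ltnW (ltn_ord j)) s_sol).
by split; rewrite ?Vs ?Vtake ?(oadd_inj Vtake) ?eqxx ?andbT.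
Qed.

Lemma card_optimalS (j : 'I_n) x : 0 <= x ->
  #|optimal j.+1 x| = ((V j.+1 x == V j x) * #|optimal j x| +
     (V j.+1 x == oadd (V j (x - (w j)%:Z)) (v j)) * #|optimal j (x - (w j)%:Z)|)%N.
Proof.
move=> x_ge0; set y := x - (w j)%:Z.
set B := [set s : {set 'I_n} | j \in s]; have inB s : (s \in B) = (j \in s) by rewrite inE.
rewrite -(cardsID B (optimal j.+1 x)) addnC.
have -> : optimal j.+1 x :\: B =
          if V j.+1 x == V j x then optimal j x else set0.
  apply/setP => s; rewrite in_setD inB; have [js|js] /= := boolP (j \in s).
    case: ifP; rewrite ?in_set0 // => _.
    by apply/esym/negP => /optimal_solutions /notin_solutions /negP.
  by rewrite optimalS_notin //; case: ifP; rewrite ?andbT ?andbF ?in_set0.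
have -> : optimal j.+1 x :&: B =
          [set j |: t | t in if V j.+1 x == oadd (V j y) (v j) then optimal j y else set0].
  apply/setP => s; rewrite in_setI inB.
  have [js|js] := boolP (j \in s); rewrite ?andbF ?andbT.
    rewrite optimalS_in //; case: ifP; rewrite ?andbT ?andbF ?imset0 ?in_set0 // => _.
    apply/idP/imsetP => [s_opt|[t t_opt ->]]; first by exists (s :\ j); rewrite ?setD1K.
    by rewrite setU1K // (notin_solutions (optimal_solutions t_opt)).
  by apply/esym/imsetP => -[t _ st]; rewrite st setU11 in js.
case: ifP => _; case: ifP => _; rewrite ?imset0 ?cards0 ?mul1n ?mul0n ?addn0 ?add0n //;
  rewrite card_in_imset // => t1 t2 /optimal_solutions/notin_solutions t1j
                                    /optimal_solutions/notin_solutions t2j /= t12;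
  by rewrite -(setU1K t1j) t12 setU1K.
Qed.

Lemma Ctab_card i x : (i <= n)%N -> C i x = #|optimal i x|.
Proof.
move=> le_in; move: i le_in x; apply: ord_ind => [|j IH] x;
  (have [x_lt0|x_ge0] := ltrP x 0; first by rewrite Ctab_neg // optimal_neg // cards0).
  by rewrite Ctab0 // optimal0 // cards1.
by rewrite CtabS // card_optimalS // !IH.
Qed.

Lemma Ctab_gt0 i x : (i <= n)%N -> 0 <= x -> (0 < C i x)%N.
Proof.
move=> le_in x_ge0; rewrite Ctab_card //; apply/card_gt0P.
have [m Vm] := Vtab_Some le_in x_ge0; have [s s_sol sm] := Vtab_attained le_in Vm.
by exists s; rewrite optimalE s_sol Vm sm eqxx.
Qed.

Hypothesis w_gt0 : forall j, (0 < w j)%N.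

Lemma weight_eq0 s : weight w s = 0%N -> s = set0.
Proof.
have [->//|[j js]] := set_0Vmem s.
by rewrite (weight_D1 js); have := w_gt0 j; case: (w j).
Qed.

Lemma optimal_cap0 i : (i <= n)%N -> optimal i 0 = [set set0].
Proof.
move=> le_in; have opt_set0 s : s \in optimal i 0 -> s = set0.
  by move=> /optimal_solutions; rewrite inE lez_nat leqn0 => /andP [_ /eqP /weight_eq0].
have := Ctab_gt0 le_in (lexx 0); rewrite Ctab_card // => /card_gt0P [s0 s0_opt].
apply/setP => s; rewrite in_set1; apply/idP/eqP => [/opt_set0 //|->].
by rewrite -(opt_set0 _ s0_opt).
Qed.

Definition completes L i x r := (L \subset r) && (r :\: L \in optimal i x).

Lemma completes_set0 i x L r :
  optimal i x = [set set0] -> completes L i x r = (L == r).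
Proof. by move=> opt1; rewrite /completes opt1 in_set1 setD_eq0 eqEsubset. Qed.

Lemma completesS (j : 'I_n) x L r : 0 <= x -> j \notin L ->
  completes L j.+1 x r =
    completes (j |: L) j (x - (w j)%:Z) r && (V j.+1 x == oadd (V j (x - (w j)%:Z)) (v j))
    || completes L j x r && (V j.+1 x == V j x).
Proof.
move=> x_ge0 jL; rewrite /completes subUset sub1set.
have [jr|jr] /= := boolP (j \in r); last first.
  by rewrite optimalS_notin ?andbA // in_setD (negbTE jr) andbF.
have jrL : j \in r :\: L by rewrite in_setD jL jr.
rewrite (optimalS_in _ jrL) // setDDl setUC.
have -> : (r :\: L \in optimal j x) = false.
  by apply: contraTF jrL => /optimal_solutions /notin_solutions ->.
by rewrite andbF orbF andbA.
Qed.

Lemma completes_exclusive (j : 'I_n) x y L r : j \notin L ->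
  ~~ (completes (j |: L) j y r && completes L j x r).
Proof.
move=> jL; apply/negP.
move=> /andP [/andP [jLr _] /andP [_ /optimal_solutions /notin_solutions]].
by rewrite in_setD jL (subsetP jLr j (setU11 _ _)).
Qed.

Lemma sloop_prob i x L r :
  (i <= n)%N -> 0 <= x -> {in L, forall k : 'I_n, (i <= k)%N} ->
  prob (sloop w v i x L) r = (completes L i x r)%:R / (C i x)%:R.
Proof.
move=> le_in; move: i le_in x L; apply: ord_ind => [|j IH] x L x_ge0 L_ge.
  by rewrite /= prob_tick prob_ret completes_set0 ?optimal0 // Ctab0 // divr1.
have jL : j \notin L by apply/negP => /L_ge; rewrite ltnn.
have L_geS : {in L, forall k : 'I_n, (j <= k)%N} by move=> k /L_ge /ltnW.
have jL_ge : {in j |: L, forall k : 'I_n, (j <= k)%N}.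
  by move=> k /setU1P [-> //|/L_geS].
rewrite /= /wt /vt item_ord /=; case: ifP => [x_le0|/negbFE x_gt0].
  have -> : x = 0 by apply/eqP; rewrite eq_le x_ge0 andbT leNgt.
  rewrite prob_tick prob_ret completes_set0 ?optimal_cap0 //.
  by rewrite Ctab_card // optimal_cap0 // cards1 divr1.
rewrite completesS // CtabS // VtabS //.
set y := x - (w j)%:Z; set a := V j x; set b := oadd (V j y) (v j).
rewrite omax_eql omax_eqr olt_omax /ole.
have [m Vm] := Vtab_Some (ltnW (ltn_ord j)) x_ge0.
case: ifP => [/and3P [wx _ /eqP ab]|not_tie].
  have y_ge0 : 0 <= y by rewrite subr_ge0.
  rewrite -ab olt_irr !mul1n !andbT prob_tick prob_flip !IH //.
  apply: mix_uniform; rewrite ?Ctab_gt0 ?(ltnW (ltn_ord j)) //.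
  exact: completes_exclusive.
have y_ge0_of_b : b != None -> 0 <= y.
  by apply: contraR; rewrite -ltNge => /(Vtab_neg j) Vy; rewrite /b Vy.
case: ifP => [ab|/negbT ab]; rewrite prob_tick.
  have y_ge0 : 0 <= y by apply: y_ge0_of_b; apply: contraTneq ab => ->; rewrite /a Vm.
  by rewrite IH // olt_asym // andbT andbF orbF /= add0n mul1n.
have ba : olt b a.
  apply: olt_total ab; apply: contraFneq not_tie => b_eq_a.
  rewrite b_eq_a olt_irr eqxx !andbT -subr_ge0 -/y.
  by apply: y_ge0_of_b; rewrite b_eq_a /a Vm.
by rewrite IH // ba andbF andbT /= addn0 mul1n.
Qed.

Lemma solutions_all x s : (s \in solutions n x) = ((weight w s)%:Z <= x).
Proof.
by rewrite inE (_ : s \subset prefix n) //; apply/subsetP => k _; rewrite inE ltn_ord.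
Qed.

Lemma optimal_Sstar W : optimal n W%:Z = Sstar W w v.
Proof.
apply/setP => s; rewrite optimalE solutions_all inE /feasible lez_nat.
have [m Vm] := Vtab_Some (leqnn n) (le0z_nat W).
have [t t_sol tm] := Vtab_attained (leqnn n) Vm; rewrite -{}tm in Vm.
have le_Vm u : (weight w u <= W)%N -> value v u <= value v t.
  rewrite -lez_nat -solutions_all => /(value_le_Vtab (leqnn n)).
  by rewrite Vm /ole /= -leNgt.
rewrite Vm; case: (boolP (weight w s <= W)%N) => //= sW.
apply/eqP/forallP => [[<-] u|s_max].
  by apply/implyP/le_Vm.
congr Some; apply/eqP; rewrite eq_le le_Vm // andbT.
by have := s_max t; rewrite -lez_nat -solutions_all t_sol.
Qed.

Lemma prob_sample1 W s :
  prob (sample1 W w v) s = (s \in Sstar W w v)%:R / #|Sstar W w v|%:R.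
Proof.
rewrite prob_tick sloop_prob //; last by move=> k; rewrite in_set0.
by rewrite /completes sub0set setD0 Ctab_card // optimal_Sstar.
Qed.

End Knapsack.

Theorem theorem3 :
  exists c : nat,
    forall (n W : nat) (w : 'I_n -> nat) (v : 'I_n -> int) (k : nat),
      (0 < W)%N -> (forall i, (0 < w i)%N) -> (0 < k)%N ->
      (* the k outputs are independent and each uniform on S^* *)
      (forall ss : seq {set 'I_n},
         prob (samples W w v k) ss =
         if size ss == k
         then \prod_(s <- ss) (if s \in Sstar W w v then (#|Sstar W w v|%:R)^-1 else 0)
         else 0)
      /\
      (* running time O(k n): every execution path uses at most c*k*(n+1) operations *)
      (forall p, p \in samples W w v k -> (p.1.2 <= c * k * n.+1)%N).
Proof.
exists 19%N => n W w v k _ w_gt0 _; split.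
  move=> ss; rewrite prob_samples; case: ifP => // _; apply: eq_bigr => s _.
  by rewrite (prob_sample1 v w_gt0); case: (s \in _); rewrite ?mul1r ?mul0r.
by move=> p /samples_cost; nia.
Qed.
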